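(* Every bipartite circle graph has odd chromatic number at most $98$.
   Context: A graph is a circle graph if there is a collection of chords of a circle in bijection with its vertices such that two vertices are adjacent if and only if their chords intersect. The odd chromatic number of a graph $G$ is the minimum number of colors in a proper vertex coloring of $G$ such that for every non-isolated vertex $v$ some color appears on an odd number of vertices of the open neighborhood $N(v)$. *)

From mathcomp Require Import all_boot.
Set Implicit Arguments. Unset Strict Implicit. Unset Printing Implicit Defensive.

Definition simple_graph (T : finType) (e : rel T) : Prop :=
  (forall x y, e x y = e y x) /\ (forall x, ~~ e x x).

Definition bipartite (T : finType) (e : rel T) : Prop :=
  exists side : T -> bool, forall x y, e x y -> side x != side y.

(* We cut the circle at a point that is not an
   endpoint, so endpoints are positions on a line (natural numbers);
   a chord is the pair of its two endpoint positions. *)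
Definition inside (p : nat * nat) (x : nat) : bool :=
  (minn p.1 p.2 < x) && (x < maxn p.1 p.2).

(* Two chords with pairwise distinct endpoints intersect iff exactly one
   endpoint of q lies strictly inside p (their endpoints interleave). *)
Definition chords_cross (p q : nat * nat) : bool :=
  inside p q.1 (+) inside p q.2.

Definition endpoints (p : nat * nat) : seq nat := [:: p.1; p.2].

Definition circle_graph (T : finType) (e : rel T) : Prop :=
  exists f : T -> nat * nat,
    [/\ forall x, (f x).1 != (f x).2,
        forall x y, x != y -> all (fun a => a \notin endpoints (f y)) (endpoints (f x))
      & forall x y, x != y -> e x y = chords_cross (f x) (f y)].

Definition odd_coloring (T : finType) (e : rel T) (k : nat) (c : T -> 'I_k) : Prop :=
  (forall x y, e x y -> c x != c y) /\
  (forall v, (exists u, e v u) ->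
     exists i : 'I_k, odd #|[set u | e v u & c u == i]|).

Definition odd_chromatic_le (T : finType) (e : rel T) (k : nat) : Prop :=
  exists c : T -> 'I_k, odd_coloring e c.

From mathcomp Require Import all_boot all_algebra zify.
Set Implicit Arguments. Unset Strict Implicit. Unset Printing Implicit Defensive.
Import GRing.Theory.

(* Colour a vertex by its side and by a label in V = F_2^4.  As the graph is
   bipartite this colouring is proper, and a vertex v has a colour of odd
   multiplicity in N(v) as soon as the labels on N(v) do not sum to 0.

   Cutting the circle turns chords into intervals [lo, hi].  Chords of one side
   do not cross, so the chords of the other side B that cover a point p form a
   chain C(p), and N(a) is the symmetric difference of C(lo a) and C(hi a).
   Labelling b in B by phi(C(lo b) U {b}) - phi(C(lo b)) makes the labels over
   C(p) telescope to phi(C(p)) - phi(empty), so it suffices that phi properly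
   colours the graph on the sets C(p) with an edge C(lo a) -- C(hi a) for every
   chord a of the first side.  This graph is 12-degenerate: along the line the set C(p)
   changes at most 2|S| times, S being the set of values it takes (each b covers
   an interval of positions), and non-crossing intervals between the t + 1
   resulting runs number at most 2(t + 1), so it has at most 4|S| + 2 edges.
   Greedy colouring with 16 > 12 labels then uses 2 * 16 <= 98 colours. *)

Lemma leq_card_imset_factor (I K K' : finType) (J : {set I}) (f : I -> K) (g : I -> K') :
  {in J &, forall a b, g a = g b -> f a = f b} -> #|f @: J| <= #|g @: J|.
Proof.
move=> fg; have [->|[a0 a0J]] := set_0Vmem J; first by rewrite !imset0 cards0.
pose h k := if [pick a in J | g a == k] is Some a then f a else f a0.
apply: leq_trans (leq_imset_card h (g @: J)); apply: subset_leq_card.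
apply/subsetP => _ /imsetP[a aJ ->]; apply/imsetP; exists (g a); first exact: imset_f.
rewrite /h; case: pickP => [b /andP[bJ /eqP gba]|/(_ a)]; first by rewrite (fg b a).
by rewrite aJ eqxx.
Qed.

Section ExponentTwo.
Local Open Scope ring_scope.
Variable V : zmodType.
Hypothesis addvv : forall v : V, v + v = 0.

Lemma oppv (v : V) : - v = v.
Proof. by apply/eqP; rewrite eq_sym -addr_eq0 addvv. Qed.

Lemma big_xor (I : finType) (X : {pred I}) (P Q : pred I) (F : I -> V) :
  \sum_(i in X | P i (+) Q i) F i = \sum_(i in X | P i) F i + \sum_(i in X | Q i) F i.
Proof.
rewrite big_mkcond [Y in Y + _]big_mkcond [Y in _ + Y]big_mkcond -big_split /=.
apply: eq_bigr => i _; case: (i \in X); rewrite ?addr0 //=.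
by case: (P i); case: (Q i); rewrite ?addr0 ?add0r ?addvv.
Qed.

End ExponentTwo.

Lemma odd_fibre_of_sum_neq0 (V : finZmodType) (I : finType) (X : {set I}) (F : I -> V) :
  (forall v : V, v + v = 0)%R -> (\sum_(i in X) F i != 0)%R ->
  exists v, odd #|[set i in X | F i == v]|.
Proof.
move=> addvv sum_neq0; apply/existsP; apply: contraNT sum_neq0 => /existsPn even_fibres.
rewrite (partition_big_imset F) big1 //= => v _.
rewrite (eq_bigr (fun=> v)) => [|i /andP[_ /eqP //]].
have even_v := even_fibres v; rewrite cardsE in even_v.
by rewrite sumr_const -(odd_double_half #|_|) (negPf even_v) -mul2n mulrnA mulr2n addvv mul0rn.
Qed.

Section Degeneracy.
Variable K : finType.
Implicit Types (E : {set K * K}) (d : nat).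

Definition nbhd E y : {set K} := [set w | ((y, w) \in E) || ((w, y) \in E)].

Definition degenerate d E :=
  forall E', E' \subset E -> E' != set0 -> exists y, 0 < #|nbhd E' y| <= d.

Lemma sum_card_nbhd E : \sum_y #|nbhd E y| <= 2 * #|E|.
Proof.
have card_fibres (h : K * K -> K) : \sum_y #|[set ek in E | h ek == y]| = #|E|.
  rewrite -sum1_card (partition_big h predT) //=; apply: eq_bigr => y _.
  by rewrite -sum1_card; apply: eq_bigl => ek; rewrite inE.
rewrite mul2n -addnn -{1}(card_fibres fst) -(card_fibres snd) -big_split /=.
apply: leq_sum => y _.
apply: leq_trans (leq_add (leq_imset_card snd [set ek in E | ek.1 == y])
                          (leq_imset_card fst [set ek in E | ek.2 == y])).
apply: leq_trans (leq_card_setU _ _); apply: subset_leq_card; apply/subsetP => w.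
rewrite inE => /orP[yw|wy]; apply/setUP.
  by left; apply/imsetP; exists (y, w); rewrite // inE yw eqxx.
by right; apply/imsetP; exists (w, y); rewrite // inE wy eqxx.
Qed.

Lemma exists_small_nbhd E d :
  2 * #|E| < d.+1 * #|[set y | nbhd E y != set0]| -> exists y, 0 < #|nbhd E y| <= d.
Proof.
move=> sparse; apply/existsP; move: sparse; apply: contraLR => /existsPn large.
rewrite -leqNgt mulnC -sum_nat_const; apply: leq_trans (sum_card_nbhd E).
rewrite [X in _ <= X](bigID (mem [set y | nbhd E y != set0])) /=.
apply: leq_trans (leq_addr _ _); apply: leq_sum => y.
rewrite inE -cards_eq0 -lt0n => nbhd_gt0; move: (large y); rewrite nbhd_gt0 /=; lia.
Qed.

Lemma exists_notin_imset (V : finType) (phi : K -> V) (X : {set K}) :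
  #|X| < #|V| -> exists v, v \notin phi @: X.
Proof.
move=> lt_XV; have /card_gt0P[v] : 0 < #|~: (phi @: X)|.
  by rewrite cardsCs setCK; move: (leq_imset_card phi X); lia.
by rewrite inE; exists v.
Qed.

Lemma degenerate_colouring (V : finType) d E :
  d < #|V| -> (forall k, (k, k) \notin E) -> degenerate d E ->
  exists phi : K -> V, forall k l, (k, l) \in E -> phi k != phi l.
Proof.
move=> d_lt; have [n] := ubnP #|E|.
elim: n E => // n IH E /ltnSE le_n loopless degE.
have [->|E_neq0] := eqVneq E set0.
  have /card_gt0P[v _] : 0 < #|V| by lia.
  by exists (fun=> v) => k l; rewrite inE.
have [y /andP[nbhd_gt0 nbhd_le]] := degE E (subxx E) E_neq0.
pose E' := [set ek in E | (ek.1 != y) && (ek.2 != y)].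
have sub : E' \subset E by apply/subsetP => ek; rewrite inE => /andP[].
have lt : #|E'| < #|E|.
  apply: proper_card; apply/properP; split => //.
  case/card_gt0P: nbhd_gt0 => w; rewrite inE => /orP[yw|wy].
    by exists (y, w); last rewrite inE /= eqxx !andbF.
  by exists (w, y); last rewrite inE /= eqxx !andbF.
have [phi phiP] : exists phi : K -> V, forall k l, (k, l) \in E' -> phi k != phi l.
  apply: IH; first lia.
    by move=> k; apply: contra (loopless k); apply/subsetP.
  by move=> E'' sub''; apply: degE; apply: subset_trans sub.
have [g g_fresh] := exists_notin_imset phi (leq_ltn_trans nbhd_le d_lt).
exists (fun k => if k == y then g else phi k) => k l kl.
have yE w : (y, w) \in E \/ (w, y) \in E -> g != phi w.
  by move=> yw; apply: contraNneq g_fresh => ->; apply: imset_f; rewrite inE; apply/orP.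
case: (eqVneq k y) => [ky|ky]; case: (eqVneq l y) => [ly|ly].
- by move: kl (loopless y); rewrite ky ly => ->.
- by apply: yE; left; rewrite -ky.
- by rewrite eq_sym; apply: yE; right; rewrite -ly.
- by apply: phiP; rewrite inE kl ky ly.
Qed.

End Degeneracy.

Section Transitions.
Variables (T I : finType) (L : nat -> {set T}) (P : {set I}) (pos : I -> nat).
Hypothesis L_convex :
  forall x y z b, x <= y <= z -> b \in L x -> b \in L z -> b \in L y.
Hypothesis pos_inj : {in P &, injective pos}.

Definition prev q : option I :=
  if [pick q0 in P | pos q0 < pos q] is Some q0
  then Some [arg max_(q' > q0 | (q' \in P) && (pos q' < pos q)) pos q'] else None.

Lemma prevP q q' : prev q = Some q' ->
  [/\ q' \in P, pos q' < pos q &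
      forall q'', q'' \in P -> pos q'' < pos q -> pos q'' <= pos q'].
Proof.
rewrite /prev; case: pickP => // q0 /andP[q0P q0_lt] [<-].
case: arg_maxnP => [|m /andP[mP m_lt] m_max]; first by rewrite q0P.
by split=> // q'' q''P q''_lt; apply: m_max; rewrite q''P.
Qed.

Lemma prev_exists q q0 : q0 \in P -> pos q0 < pos q -> exists q', prev q = Some q'.
Proof.
move=> q0P q0_lt; rewrite /prev; case: pickP => [q1 _|/(_ q0)]; first by eexists.
by rewrite q0P q0_lt.
Qed.

Definition transitions : {set I} := [set q in P |
  if prev q is Some q' then L (pos q') != L (pos q) else false].

Definition rank x := #|[set q in transitions | pos q <= x]|.

Definition labels := [set L (pos q) | q in P].

Lemma rank_mono : {homo rank : x y / x <= y}.
Proof.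
move=> x y le_xy; apply: subset_leq_card; apply/subsetP => q; rewrite !inE.
by case/andP=> -> /leq_trans->.
Qed.

Lemma ltn_of_rank x y : rank x < rank y -> x < y.
Proof. by apply: contraTT; rewrite -!leqNgt; apply: rank_mono. Qed.

Lemma rank_le_card x : rank x <= #|transitions|.
Proof. by apply: subset_leq_card; apply/subsetP => q; rewrite inE => /andP[]. Qed.

Lemma rank_lt_of_label_neq p p' : p \in P -> p' \in P -> pos p < pos p' ->
  L (pos p) != L (pos p') -> rank (pos p) < rank (pos p').
Proof.
move=> pP p'P lt_pp' neq_pp'.
pose changed q := [&& q \in P, pos p < pos q & L (pos q) != L (pos p)].
have changed_p' : changed p' by rewrite /changed p'P lt_pp' eq_sym neq_pp'.
case: (arg_minnP pos changed_p') => q /and3P[qP lt_pq neq_q] q_min.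
have [q' prev_q] := prev_exists pP lt_pq.
have [q'P lt_q'q q'_max] := prevP prev_q.
have L_q' : L (pos q') = L (pos p).
  have [lt_pq'|] := ltnP (pos p) (pos q').
    apply/eqP; apply: contraTT lt_q'q => neq_q'; rewrite -leqNgt.
    by apply: q_min; rewrite /changed q'P lt_pq'.
  by move=> le_q'p; rewrite (@anti_leq (pos q') (pos p)) // le_q'p q'_max.
have q_trans : q \in transitions by rewrite inE qP prev_q L_q' eq_sym.
apply: proper_card; apply/properP; split.
  apply/subsetP => z; rewrite !inE => /andP[-> le_z] /=.
  exact: leq_trans le_z (ltnW lt_pp').
exists q; first by rewrite inE q_trans q_min.
by rewrite inE q_trans -ltnNge.
Qed.

Lemma label_eq_of_rank_eq p p' : p \in P -> p' \in P ->
  rank (pos p) = rank (pos p') -> L (pos p) = L (pos p').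
Proof.
move=> pP p'P eq_rank; apply/eqP/negP => /negP neq_L.
have neq_L' : L (pos p') != L (pos p) by rewrite eq_sym.
have [lt|lt|eq_pos] := ltngtP (pos p) (pos p').
- by move: (rank_lt_of_label_neq pP p'P lt neq_L); rewrite eq_rank ltnn.
- by move: (rank_lt_of_label_neq p'P pP lt neq_L'); rewrite eq_rank ltnn.
- by rewrite eq_pos eqxx in neq_L.
Qed.

(* A change between consecutive positions q' and q either gains an element,
   recorded with the new set, or only loses elements, recorded with the old
   one; convexity of membership in [L] makes this record injective. *)
Definition transition_code q : bool * {set T} :=
  if prev q is Some q' then
    if L (pos q) \subset L (pos q') then (false, L (pos q')) else (true, L (pos q))
  else (false, set0).

Lemma transition_code_neq q1 q2 : q1 \in transitions -> q2 \in transitions ->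
  pos q1 < pos q2 -> transition_code q1 != transition_code q2.
Proof.
rewrite !inE => /andP[q1P]; case prev_q1: (prev q1) => [p1|] // neq1.
case/andP=> q2P; case prev_q2: (prev q2) => [p2|] // neq2 lt_q12.
have [p1P lt_p1q1 _] := prevP prev_q1; have [p2P lt_p2q2 p2_max] := prevP prev_q2.
have le_q1p2 : pos q1 <= pos p2 := p2_max _ q1P lt_q12.
rewrite /transition_code prev_q1 prev_q2.
case: ifP => sub1; case: ifP => sub2 //; apply/eqP => -[eq_L].
- have /subsetPn[b bp1 bq1] : ~~ (L (pos p1) \subset L (pos q1)).
    by apply: contra neq1 => sub1'; rewrite eq_sym eqEsubset sub1 sub1'.
  apply: (negP bq1); apply: (@L_convex (pos p1) _ (pos p2)) => //; last by rewrite -eq_L.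
  by rewrite (ltnW lt_p1q1).
- have /subsetPn[b bq2 bp2] := negbT sub2.
  apply: (negP bp2); apply: (@L_convex (pos q1) _ (pos q2)) => //; last by rewrite eq_L.
  by rewrite le_q1p2 ltnW.
Qed.

Lemma card_transitions : #|transitions| <= 2 * #|labels|.
Proof.
have transP q : q \in transitions -> q \in P by rewrite inE => /andP[].
have code_inj : {in transitions &, injective transition_code}.
  move=> q1 q2 q1T q2T eq_code.
  have [lt|lt|eq_pos] := ltngtP (pos q1) (pos q2).
  - by move: (transition_code_neq q1T q2T lt); rewrite eq_code eqxx.
  - by move: (transition_code_neq q2T q1T lt); rewrite eq_code eqxx.
  - exact: pos_inj (transP _ q1T) (transP _ q2T) eq_pos.
rewrite -(card_in_imset code_inj) -[2]card_bool -cardsT -cardsX.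
apply: subset_leq_card; apply/subsetP => _ /imsetP[q qT ->].
move: qT; rewrite inE /transition_code => /andP[qP].
case prev_q: (prev q) => [p|] // _; have [pP _ _] := prevP prev_q.
by rewrite !inE /=; case: ifP => _; apply: imset_f.
Qed.

End Transitions.

Definition noncrossing (I : finType) (lo hi : I -> nat) (A : {set I}) :=
  forall x y, x \in A -> y \in A -> ~ [/\ lo x < lo y, lo y < hi x & hi x < hi y].

Definition distinct_endpoints (I : finType) (lo hi : I -> nat) (A : {set I}) :=
  forall x y, x \in A -> y \in A -> x != y ->
  [/\ lo x != lo y, lo x != hi y, hi x != lo y & hi x != hi y].

Section NoncrossingIntervals.
Variables (I : finType) (J : {set I}) (i j : I -> nat) (N : nat).
Hypothesis i_lt_j : {in J, forall a, i a < j a}.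
Hypothesis j_le_N : {in J, forall a, j a <= N}.
Hypothesis J_noncrossing : noncrossing i j J.

Definition has_interval l r := [exists a in J, (i a == l) && (j a == r)].

Definition inner_end l r :=
  \max_(k < r | (l < k) && ((k == l.+1 :> nat) || has_interval l k)) (k : nat).

Lemma inner_endP l r : l.+1 < r ->
  [/\ l < inner_end l r, inner_end l r < r,
      (inner_end l r == l.+1) || has_interval l (inner_end l r) &
      forall k, l < k < r -> (k == l.+1) || has_interval l k -> k <= inner_end l r].
Proof.
move=> lt_lr; pose cand (k : 'I_r) := (l < k) && ((k == l.+1 :> nat) || has_interval l k).
have : 0 < #|cand|.
  by apply/card_gt0P; exists (Ordinal lt_lr); rewrite unfold_in /cand /= ltnSn eqxx.
case/(eq_bigmax_cond (fun k : 'I_r => (k : nat))) => k0.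
rewrite unfold_in => /andP[lt_lk0 cand_k0] max_k0.
have max_ge k (lt_kr : k < r) : cand (Ordinal lt_kr) -> k <= inner_end l r.
  exact: (leq_bigmax_cond (Ordinal lt_kr)).
rewrite /inner_end -/cand max_k0; split=> // k /andP[lt_lk lt_kr] cand_k.
by rewrite -max_k0; apply: (max_ge k lt_kr); rewrite /cand /= lt_lk.
Qed.

Lemma inner_end_neq_of_ltn a b : a \in J -> b \in J ->
  (i a).+1 < j a -> (i b).+1 < j b -> i a < i b ->
  inner_end (i a) (j a) != inner_end (i b) (j b).
Proof.
move=> aJ bJ long_a long_b lt_ab; apply/eqP => eq_end.
have [_ _ end_a _] := inner_endP long_a; have [lt_end_b end_lt_b _ _] := inner_endP long_b.
rewrite eq_end in end_a.
have not_succ : inner_end (i b) (j b) != (i a).+1 by apply/eqP; lia.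
rewrite (negPf not_succ) /= in end_a.
case/exists_inP: end_a => c cJ /andP[/eqP i_c /eqP j_c].
by apply: (J_noncrossing cJ bJ); rewrite i_c j_c.
Qed.

Lemma inner_end_neq_of_eq a b : a \in J -> b \in J ->
  (i a).+1 < j a -> (i b).+1 < j b -> i a = i b -> j a < j b ->
  inner_end (i a) (j a) != inner_end (i b) (j b).
Proof.
move=> aJ bJ long_a long_b eq_i lt_j.
have [_ end_lt_a _ _] := inner_endP long_a; have [_ _ _ max_b] := inner_endP long_b.
have: j a <= inner_end (i b) (j b).
  apply: max_b; first by rewrite -eq_i i_lt_j.
  by apply/orP; right; apply/exists_inP; exists a; rewrite // eq_i !eqxx.
by apply: contraTneq => <-; rewrite -ltnNge.
Qed.

(* Two long intervals with the same [inner_end] cannot have distinct left ends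
   (the interval ending at that code would cross the other one), nor the same
   left end (the shorter one would contradict the maximality of the longer
   one's [inner_end]). *)
Definition interval_code a : bool * 'I_N.+1 :=
  if j a == (i a).+1 then (false, inord (i a)) else (true, inord (inner_end (i a) (j a))).

Lemma interval_code_inj a b : a \in J -> b \in J ->
  interval_code a = interval_code b -> i a = i b /\ j a = j b.
Proof.
move=> aJ bJ; have lt_a := i_lt_j aJ; have lt_b := i_lt_j bJ.
have le_a := j_le_N aJ; have le_b := j_le_N bJ.
have inord_inj m n : m <= N -> n <= N -> inord m = inord n :> 'I_N.+1 -> m = n.
  by move=> le_m le_n /(congr1 (@nat_of_ord _)); rewrite !inordK ?ltnS.
rewrite /interval_code; case: eqP => short_a; case: eqP => short_b // [].
  by move/inord_inj => /(_ ltac:(lia) ltac:(lia)) eq_i; split; lia.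
have long_a : (i a).+1 < j a by lia.
have long_b : (i b).+1 < j b by lia.
have [_ end_a _ _] := inner_endP long_a; have [_ end_b _ _] := inner_endP long_b.
move/inord_inj => /(_ ltac:(lia) ltac:(lia)) /eqP eq_end.
have [lt_i|lt_i|eq_i] := ltngtP (i a) (i b).
- by move: eq_end; rewrite (negPf (inner_end_neq_of_ltn aJ bJ long_a long_b lt_i)).
- by move: eq_end; rewrite eq_sym (negPf (inner_end_neq_of_ltn bJ aJ long_b long_a lt_i)).
split=> //; have [lt_j|lt_j|//] := ltngtP (j a) (j b).
- by move: eq_end; rewrite (negPf (inner_end_neq_of_eq aJ bJ long_a long_b eq_i lt_j)).
- move: eq_end; rewrite eq_sym.
  by rewrite (negPf (inner_end_neq_of_eq bJ aJ long_b long_a (esym eq_i) lt_j)).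
Qed.

Lemma card_imset_noncrossing (K : finType) (f : I -> K) :
  {in J &, forall a b, i a = i b -> j a = j b -> f a = f b} -> #|f @: J| <= 2 * N.+1.
Proof.
move=> f_ij; apply: leq_trans (leq_card_imset_factor (g := interval_code) _) _.
  by move=> a b aJ bJ /(interval_code_inj aJ bJ)[]; apply: f_ij.
by apply: leq_trans (max_card _) _; rewrite card_prod card_bool card_ord.
Qed.

End NoncrossingIntervals.

Section Covers.
Variables (T : finType) (lo hi : T -> nat) (B : {set T}).

Definition cover p := [set b in B | lo b < p < hi b].

Lemma cover_convex x y z b :
  x <= y <= z -> b \in cover x -> b \in cover z -> b \in cover y.
Proof. by rewrite !inE => ? /and3P[-> ? ?] /and3P[_ ? ?]; apply/andP; split; lia. Qed.

Section Telescoping.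
Hypothesis lo_inj : {in B &, injective lo}.
Hypothesis B_noncrossing : noncrossing lo hi B.

Lemma cover_innermost x c : c \in cover x ->
  (forall b, b \in cover x -> lo b <= lo c) -> cover x = c |: cover (lo c).
Proof.
move=> cx c_max; apply/setP => b; rewrite in_setU1.
have [->|neq_bc] := eqVneq b c; first by rewrite cx.
move: (cx); rewrite !inE => /and3P[cB lt_c1 lt_c2].
apply/and3P/and3P => -[bB lt_b1 lt_b2].
- have lt_bc : lo b < lo c.
    rewrite ltn_neqAle c_max ?inE ?bB ?lt_b1 // andbT.
    by apply: contra neq_bc => /eqP/lo_inj->.
  by split=> //; lia.
- have: ~ (hi b < hi c) by move=> ?; apply: (B_noncrossing bB cB); split.
  by split=> //; lia.
Qed.

Variables (V : zmodType) (phi : {set T} -> V).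

Definition increment b := (phi (b |: cover (lo b)) - phi (cover (lo b)))%R.

Lemma sum_increment_cover x :
  (\sum_(b in cover x) increment b = phi (cover x) - phi set0)%R.
Proof.
have [n] := ubnP #|cover x|; elim: n x => // n IH x /ltnSE le_n.
have [->|[c0 c0x]] := set_0Vmem (cover x); first by rewrite big_set0 subrr.
have [c cx c_max] := arg_maxnP lo c0x.
have cxE := cover_innermost cx c_max.
have c_notin : c \notin cover (lo c) by rewrite inE ltnn andbF.
rewrite cxE big_setU1 //= IH; last by move: le_n; rewrite cxE cardsU1 c_notin.
by rewrite /increment -cxE addrA subrK.
Qed.

End Telescoping.
End Covers.

Section CoverGraph.
Variables (T : finType) (lo hi : T -> nat) (B A : {set T}).
Hypothesis lo_lt_hi : {in A, forall a, lo a < hi a}.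
Hypothesis A_endpoints : distinct_endpoints lo hi A.
Hypothesis A_noncrossing : noncrossing lo hi A.

Local Notation cover := (cover lo hi B).

Definition cover_edge a := (cover (lo a), cover (hi a)).

Definition endpoint (q : T * bool) := if q.2 then hi q.1 else lo q.1.

Section SubFamily.
Variable A' : {set T}.
Hypothesis sub_A' : A' \subset A.
Hypothesis A'_split : {in A', forall a, cover (lo a) != cover (hi a)}.

Let P := [set q : T * bool | q.1 \in A'].
Let rk := rank cover P endpoint.

Lemma lo_in_P a : a \in A' -> (a, false) \in P. Proof. by rewrite inE. Qed.
Lemma hi_in_P a : a \in A' -> (a, true) \in P. Proof. by rewrite inE. Qed.

Lemma endpoint_inj : {in P &, injective endpoint}.
Proof.
move=> [a s] [a' s']; rewrite !inE /endpoint /= => aA' a'A'.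
have aA := subsetP sub_A' _ aA'; have a'A := subsetP sub_A' _ a'A'.
have [<-|/(A_endpoints aA a'A)[ne1 ne2 ne3 ne4]] := eqVneq a a'.
  by case: s; case: s' => //= eq_pos; move: (lo_lt_hi aA); rewrite eq_pos ltnn.
by case: s; case: s' => /= eq_pos; [move: ne4|move: ne3|move: ne2|move: ne1];
  rewrite eq_pos eqxx.
Qed.

Lemma rank_lo_lt_hi a : a \in A' -> rk (lo a) < rk (hi a).
Proof.
move=> aA'; have aA := subsetP sub_A' _ aA'.
exact: (rank_lt_of_label_neq (lo_in_P aA') (hi_in_P aA') (lo_lt_hi aA) (A'_split aA')).
Qed.

Lemma rank_noncrossing : noncrossing (rk \o lo) (rk \o hi) A'.
Proof.
move=> a b aA' bA' [/ltn_of_rank lt1 /ltn_of_rank lt2 /ltn_of_rank lt3].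
exact: (A_noncrossing (subsetP sub_A' _ aA') (subsetP sub_A' _ bA')).
Qed.

Lemma cover_edge_of_rank a b : a \in A' -> b \in A' ->
  rk (lo a) = rk (lo b) -> rk (hi a) = rk (hi b) -> cover_edge a = cover_edge b.
Proof.
move=> aA' bA' eq_lo eq_hi; rewrite /cover_edge.
rewrite (label_eq_of_rank_eq (lo_in_P aA') (lo_in_P bA') eq_lo).
by rewrite (label_eq_of_rank_eq (hi_in_P aA') (hi_in_P bA') eq_hi).
Qed.

Lemma card_cover_edges : #|cover_edge @: A'| <= 2 * (2 * #|labels cover P endpoint|).+1.
Proof.
have rank_le a : a \in A' -> rk (hi a) <= #|transitions cover P endpoint|.
  by move=> _; apply: rank_le_card.
apply: leq_trans (card_imset_noncrossing rank_lo_lt_hi rank_le rank_noncrossing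
  cover_edge_of_rank) _.
by rewrite leq_mul2l ltnS card_transitions //; [exact: cover_convex | exact: endpoint_inj].
Qed.

Lemma labels_sub_vertices :
  labels cover P endpoint \subset [set y | nbhd (cover_edge @: A') y != set0].
Proof.
apply/subsetP => _ /imsetP[[a s] + ->]; rewrite !inE /= => aA'; apply/set0Pn.
exists (if s then cover (lo a) else cover (hi a)); rewrite inE; apply/orP.
by case: s; [right | left]; apply: imset_f.
Qed.

Lemma cover_graph_small_nbhd :
  A' != set0 -> exists y, 0 < #|nbhd (cover_edge @: A') y| <= 12.
Proof.
move=> /set0Pn[a aA']; apply: exists_small_nbhd.
have : 0 < #|labels cover P endpoint|.
  by apply/card_gt0P; exists (cover (lo a)); apply: (imset_f _ (lo_in_P aA')).
have := subset_leq_card labels_sub_vertices; have := card_cover_edges.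
by set E := #|_ @: A'|; set W := #|[set y | _]|; lia.
Qed.

End SubFamily.

Lemma cover_graph_degenerate :
  degenerate 12 [set cover_edge a | a in A & cover (lo a) != cover (hi a)].
Proof.
move=> E' sub_E' E'_neq0.
pose A' := [set a in A | cover_edge a \in E'].
have E'_eq : E' = cover_edge @: A'.
  apply/setP => ek; apply/idP/imsetP => [ekE'|[a + ->]]; last by rewrite inE => /andP[].
  move/subsetP: sub_E' => /(_ ek ekE') /imsetP[a]; rewrite inE => /andP[aA _] ek_eq.
  by exists a; rewrite // inE aA -ek_eq.
have sub_A' : A' \subset A by apply/subsetP => a; rewrite inE => /andP[].
have A'_split : {in A', forall a, cover (lo a) != cover (hi a)}.
  move=> a; rewrite inE => /andP[_ /(subsetP sub_E') /imsetP[a0]].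
  by rewrite inE => /andP[_ split_a0] [-> ->].
rewrite E'_eq; apply: cover_graph_small_nbhd sub_A' A'_split _.
by apply: contraNneq E'_neq0 => A'0; rewrite E'_eq A'0 imset0.
Qed.

End CoverGraph.

Section CoverLabelling.
Variables (T : finType) (lo hi : T -> nat) (B A : {set T}).
Hypothesis lo_inj : {in B &, injective lo}.
Hypothesis B_noncrossing : noncrossing lo hi B.
Hypothesis lo_lt_hi : {in A, forall a, lo a < hi a}.
Hypothesis A_endpoints : distinct_endpoints lo hi A.
Hypothesis A_noncrossing : noncrossing lo hi A.
Variable V : finZmodType.
Hypothesis addvv : forall v : V, (v + v = 0)%R.
Hypothesis V_large : 12 < #|V|.

Local Notation cover := (cover lo hi B).

Lemma exists_cover_labelling : exists lambda : T -> V,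
  forall a, a \in A -> cover (lo a) != cover (hi a) ->
  (\sum_(b in B | (lo b < lo a < hi b)%N (+) (lo b < hi a < hi b)%N) lambda b != 0)%R.
Proof.
pose E := [set cover_edge lo hi B a | a in A & cover (lo a) != cover (hi a)].
have loopless k : (k, k) \notin E.
  apply/imsetP => -[a]; rewrite inE => /andP[_ split_a] [eq_lo eq_hi].
  by rewrite -eq_lo -eq_hi eqxx in split_a.
have [phi phiP] := degenerate_colouring V_large loopless
  (cover_graph_degenerate lo_lt_hi A_endpoints A_noncrossing).
exists (increment lo hi B phi) => a aA split_a.
have sum_cover p : (\sum_(b in B | (lo b < p < hi b)%N) increment lo hi B phi b =
    phi (cover p) - phi set0)%R.
  by rewrite -(sum_increment_cover lo_inj B_noncrossing); apply: eq_bigl => b; rewrite inE.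
rewrite big_xor // !sum_cover addrACA -opprD addvv oppr0 addr0 addr_eq0 (oppv addvv).
by apply: phiP; apply/imsetP; exists a; rewrite ?inE ?aA.
Qed.

End CoverLabelling.

Definition chord_lo (T : Type) (f : T -> nat * nat) x := minn (f x).1 (f x).2.
Definition chord_hi (T : Type) (f : T -> nat * nat) x := maxn (f x).1 (f x).2.

Lemma chords_cross_minmax p q :
  chords_cross p q = inside p (minn q.1 q.2) (+) inside p (maxn q.1 q.2).
Proof. by rewrite /chords_cross; case: leqP => // _; rewrite addbC. Qed.

Section BipartiteCircleGraph.
Variables (T : finType) (e : rel T) (side : T -> bool) (f : T -> nat * nat).
Hypothesis e_sym : forall x y, e x y = e y x.
Hypothesis e_irr : forall x, ~~ e x x.
Hypothesis side_e : forall x y, e x y -> side x != side y.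
Hypothesis f_chord : forall x, (f x).1 != (f x).2.
Hypothesis f_distinct : forall x y, x != y ->
  all (fun a => a \notin endpoints (f y)) (endpoints (f x)).
Hypothesis e_cross : forall x y, x != y -> e x y = chords_cross (f x) (f y).

Local Notation lo := (chord_lo f).
Local Notation hi := (chord_hi f).

Lemma chord_lo_lt_hi x : lo x < hi x.
Proof. by have := f_chord x; rewrite /chord_lo /chord_hi; lia. Qed.

Lemma chord_endpoints_neq x y : x != y ->
  [/\ lo x != lo y, lo x != hi y, hi x != lo y & hi x != hi y].
Proof.
move/f_distinct; rewrite /endpoints /= !inE !negb_or andbT.
by case/andP => /andP[? ?] /andP[? ?]; rewrite /chord_lo /chord_hi; split; lia.
Qed.

Lemma chord_lo_inj : injective lo.
Proof.
move=> x y eq_lo; apply/eqP; apply: contraT => /chord_endpoints_neq[].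
by rewrite eq_lo eqxx.
Qed.

Lemma adjacentE v u :
  e v u = (side u == ~~ side v) && ((lo u < lo v < hi u) (+) (lo u < hi v < hi u)).
Proof.
have [->|neq_uv] := eqVneq u v; first by rewrite (negPf (e_irr v)); case: (side v).
have [eq_side|neq_side] := eqVneq (side u) (side v).
  rewrite eq_side; case: (side v) => /=; apply/negbTE/negP => /side_e;
  by rewrite eq_side eqxx.
rewrite e_sym e_cross // chords_cross_minmax.
by move: neq_side; case: (side u); case: (side v).
Qed.

Lemma side_noncrossing s : noncrossing lo hi [set x | side x == s].
Proof.
move=> x y; rewrite !inE => /eqP side_x /eqP side_y [lt1 lt2 lt3].
have neq_xy : x != y by apply: contraTneq lt1 => ->; rewrite ltnn.
have: e x y.
  rewrite e_cross // chords_cross_minmax.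
  change ((lo x < lo y < hi x) (+) (lo x < hi y < hi x)).
  by rewrite lt1 lt2 /= [hi y < _]ltnNge (ltnW lt3) andbF.
by move/side_e; rewrite side_x side_y eqxx.
Qed.

Variable V : finZmodType.
Hypothesis addvv : forall v : V, (v + v = 0)%R.
Hypothesis V_large : 12 < #|V|.

Lemma exists_side_labelling s : exists lambda : T -> V,
  forall v, side v = s -> (exists u, e v u) -> (\sum_(u in [set u | e v u]) lambda u != 0)%R.
Proof.
have [lambda lambdaP] := exists_cover_labelling (in2W chord_lo_inj)
  (side_noncrossing (s := ~~ s)) (in1W chord_lo_lt_hi)
  (fun x y _ _ => @chord_endpoints_neq x y) (side_noncrossing (s := s)) addvv V_large.
exists lambda => v side_v [u e_vu].
rewrite (eq_bigl (fun u => (u \in [set x | side x == ~~ s]) &&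
  ((lo u < lo v < hi u) (+) (lo u < hi v < hi u)))); last first.
  by move=> w; rewrite !inE adjacentE side_v.
apply: lambdaP; first by rewrite inE side_v.
apply/negP => /eqP eq_cover; move: e_vu; rewrite adjacentE side_v.
case/andP=> side_u; move/setP/(_ u): eq_cover.
by rewrite !inE side_u /= => ->; rewrite addbb.
Qed.

Lemma exists_bipartite_labelling : exists lambda : bool -> T -> V,
  forall v, (exists u, e v u) -> (\sum_(u in [set u | e v u]) lambda (side v) u != 0)%R.
Proof.
have [lambda0 lambda0P] := exists_side_labelling false.
have [lambda1 lambda1P] := exists_side_labelling true.
exists (fun s => if s then lambda1 else lambda0) => v.
by case side_v: (side v); [apply: lambda1P | apply: lambda0P].
Qed.

End BipartiteCircleGraph.

Lemma odd_chromatic_le_of_colouring (T K : finType) (e : rel T) (k : nat) (c : T -> K) :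
  #|K| <= k -> (forall x y, e x y -> c x != c y) ->
  (forall v, (exists u, e v u) -> exists i, odd #|[set u | e v u & c u == i]|) ->
  odd_chromatic_le e k.
Proof.
move=> K_le c_proper c_odd.
pose h i : 'I_k := widen_ord K_le (enum_rank i).
have h_inj : injective h.
  by move=> i j /(congr1 val) /= /val_inj; apply: enum_rank_inj.
exists (h \o c); split=> [x y /c_proper|v /c_odd[i odd_i]]; first by rewrite (inj_eq h_inj).
exists (h i); suff -> : [set u | e v u & h (c u) == h i] = [set u | e v u & c u == i] by [].
by apply/setP => u; rewrite !inE (inj_eq h_inj).
Qed.

Lemma odd_chromatic_le_of_labelling (T : finType) (e : rel T) (side : T -> bool)
    (V : finZmodType) (lambda : bool -> T -> V) (k : nat) :
  (forall v : V, v + v = 0)%R -> 2 * #|V| <= k ->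
  (forall x y, e x y -> side x != side y) ->
  (forall v, (exists u, e v u) -> (\sum_(u in [set u | e v u]) lambda (side v) u != 0)%R) ->
  odd_chromatic_le e k.
Proof.
move=> addvv V_le side_e lambda_sum.
apply: (@odd_chromatic_le_of_colouring _ _ _ _ (fun x => (side x, lambda (~~ side x) x))).
- by rewrite card_prod card_bool.
- by move=> x y /side_e; apply: contra => /eqP[->].
move=> v /lambda_sum /(odd_fibre_of_sum_neq0 addvv)[g odd_g].
exists (~~ side v, g).
suff -> : [set u | e v u & (side u, lambda (~~ side u) u) == (~~ side v, g)] =
  [set u in [set u | e v u] | lambda (side v) u == g] by [].
apply/setP => u; rewrite !inE; case e_vu: (e v u) => //=.
have /negPf side_u := side_e _ _ e_vu.
by case: (side u) (side v) side_u => -[].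
Qed.

Lemma addvv_F2 n (v : 'rV['F_2]_n) : (v + v = 0)%R.
Proof. by apply/rowP => k; rewrite !mxE addrr_pchar2 ?pchar_Fp. Qed.

Theorem corollary1p6 (T : finType) (e : rel T) :
  simple_graph e -> bipartite e -> circle_graph e -> odd_chromatic_le e 98.
Proof.
move=> [e_sym e_irr] [side side_e] [f [f_chord f_distinct e_cross]].
have card_V : #|'rV['F_2]_4| = 16 by rewrite card_mx card_Fp.
have V_large : 12 < #|'rV['F_2]_4| by rewrite card_V.
have [lambda lambdaP] := exists_bipartite_labelling e_sym e_irr side_e f_chord
  f_distinct e_cross (@addvv_F2 4) V_large.
by apply: (odd_chromatic_le_of_labelling (@addvv_F2 4) _ side_e lambdaP); rewrite card_V.
Qed.
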